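(* Let $(\Gamma,d)$ be a countable discrete metric space admitting an $F$-function, and let $(\mathcal{A},\{\mathcal{A}_X\}_{X\in\mathcal{P}_0(\Gamma)},\Phi)$ be a quantum many-body system satisfying (A1) whose interaction is bounded and has finite range $\mathfrak{r}>0$. Fix $X\in\mathcal{P}_0(\Gamma)$ and $n>0$, and put \[ H_{R,n}:=\sum_{Y\in\mathcal{P}_0(\Gamma),\ Y\cap X_{\mathrm{int}}(n+\mathfrak{r})\neq\emptyset}\Phi(Y). \] Then \[ \|[H_\Lambda,H_{R,n}]\|\le2\mathfrak{j}'\mathfrak{j}''\,|\partial_\Phi(X_{\mathrm{int}}(n+\mathfrak{r}))|\quad\text{for every }\Lambda\in\mathcal{P}_0(\Gamma)\text{ with }\Lambda\supseteq X_{\mathrm{int}}(n+\mathfrak{r}), \] \[ \|[H_\Lambda,H_{X(n+\mathfrak{r})}]\|\le2\mathfrak{j}'\mathfrak{j}''\,|\partial_\Phi(X(n+\mathfrak{r}))|\quad\text{for every }\Lambda\in\mathcal{P}_0(\Gamma)\text{ with }\Lambda\supseteq X(n+\mathfrak{r}). \]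
   Context: $(\Gamma,d)$ is a countable discrete metric space, $\mathcal{P}_0(\Gamma)$ its finite subsets, $\Lambda^c:=\Gamma\setminus\Lambda$, $d(x,\Lambda):=\inf_{y\in\Lambda}d(x,y)$, $\mathrm{diam}(Y):=\sup_{x,y\in Y}d(x,y)$. An $F$-function is a non-increasing $F:[0,\infty)\to(0,\infty)$ with $\sup_{x}\sum_{y}F(d(x,y))<\infty$ and $\sup_{x,y}\sum_{z}F(d(x,z))F(d(z,y))/F(d(x,y))<\infty$. A quantum many-body system is a triple $(\mathcal{A},\{\mathcal{A}_X\},\Phi)$: $\mathcal{A}$ a unital $C^*$-algebra, $\{\mathcal{A}_X\}_{X\in\mathcal{P}_0(\Gamma)}$ an increasing net of simple $C^*$-subalgebras with norm-dense union $\mathcal{A}_{\mathrm{loc}}$, $\Phi:\mathcal{P}_0(\Gamma)\to\mathcal{A}_{\mathrm{loc}}$ with $\Phi(X)=\Phi(X)^*\in\mathcal{A}_X$; for $\Lambda\subseteq\Gamma$, $\mathcal{A}_\Lambda$ is generated by the $\mathcal{A}_X$ with $X\subseteq\Lambda$ finite. (A1): $\Phi(X)$ commutes with $\mathcal{A}_{X^c}$. Bounded: $\sup_x\sum_{Y\ni x}\|\Phi(Y)\|/|Y|<\infty$; finite range $\mathfrak{r}$: $\Phi(Y)=0$ if $\mathrm{diam}(Y)>\mathfrak{r}$. $\mathfrak{j}':=\sup_x\sum_{Y\in\mathcal{P}_0(\Gamma),x\in Y}\|\Phi(Y)\|$, $\mathfrak{j}'':=\sup_x\sum_{Y\in\mathcal{P}_0(\Gamma),x\in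 Y}|Y|\|\Phi(Y)\|$. For $\Lambda\subseteq\Gamma$ finite, $H_\Lambda:=\sum_{Y\subseteq\Lambda}\Phi(Y)$. $\partial_\Phi\Lambda:=\{x\in\Lambda:\exists Y\in\mathcal{P}_0(\Gamma),\ x\in Y,\ Y\cap\Lambda^c\neq\emptyset,\ \Phi(Y)\neq0\}$. $X_{\mathrm{int}}(m):=\{x\in\Gamma:d(x,X^c)>m\}$, $X(m):=\{x\in\Gamma:d(x,X)\le m\}$. *)

From HB Require Import structures.
From mathcomp Require Import all_boot all_order all_algebra.
From mathcomp Require Import finmap.
From mathcomp Require Import all_classical all_reals all_analysis.
From mathcomp Require Import complex.
Set Implicit Arguments. Unset Strict Implicit. Unset Printing Implicit Defensive.
Import Order.TTheory GRing.Theory Num.Theory.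
Local Open Scope classical_set_scope.
Local Open Scope ring_scope.

Section Defs.
Variable R : realType.
Local Notation C := (R[i]).

Section Cstar.
Variables (A : algType C) (star : A -> A) (nrm : A -> R).

Definition norm_lim (u : nat -> A) (l : A) : Prop :=
  forall e : R, 0 < e -> exists N, forall n, (N <= n)%N -> nrm (u n - l) < e.

Definition norm_complete : Prop := forall u : nat -> A,
  (forall e : R, 0 < e -> exists N, forall m n, (N <= m)%N -> (N <= n)%N ->
       nrm (u m - u n) < e) ->
  exists l, norm_lim u l.

Record is_CstarAlg : Prop := {
  nrm_ge0 : forall a, 0 <= nrm a;
  nrm_eq0 : forall a, nrm a = 0 -> a = 0;
  nrm_triangle : forall a b, nrm (a + b) <= nrm a + nrm b;
  nrm_scale : forall (l : C) a, ((nrm (l *: a))%:C)%C = `|l| * ((nrm a)%:C)%C;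
  nrm_submul : forall a b, nrm (a * b) <= nrm a * nrm b;
  nrm_complete : norm_complete;
  star_add : forall a b, star (a + b) = star a + star b;
  star_scale : forall (l : C) a, star (l *: a) = (l^*)%C *: star a;
  star_mul : forall a b, star (a * b) = star b * star a;
  star_invol : forall a, star (star a) = a;
  cstar_identity : forall a, nrm (star a * a) = nrm a ^+ 2
}.

Definition norm_closed (B : set A) : Prop :=
  forall u l, (forall n, B (u n)) -> norm_lim u l -> B l.

Definition is_Cstar_sub (B : set A) : Prop :=
  [/\ B 0 /\ (forall a b, B a -> B b -> B (a + b)),
      (forall (l : C) a, B a -> B (l *: a)),
      (forall a b, B a -> B b -> B (a * b)),
      (forall a, B a -> B (star a)) & norm_closed B].

Definition is_closed_ideal (B I : set A) : Prop :=
  [/\ I `<=` B /\ I 0, (forall a b, I a -> I b -> I (a + b)),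
      (forall (l : C) a, I a -> I (l *: a)),
      (forall a b, B a -> I b -> I (a * b) /\ I (b * a)) & norm_closed I].

Definition is_simple (B : set A) : Prop :=
  forall I, is_closed_ideal B I -> I = [set 0] \/ I = B.

Definition commutator (a b : A) : A := a * b - b * a.
End Cstar.

Section Metric.
Variables (G : countType) (d : G -> G -> R).

Definition is_metric : Prop :=
  [/\ (forall x y, 0 <= d x y), (forall x y, d x y = 0 <-> x = y),
      (forall x y, d x y = d y x) & (forall x y z, d x z <= d x y + d y z)].

Definition is_discrete : Prop :=
  forall x, exists2 e : R, 0 < e & forall y, d x y < e -> y = x.

Definition is_Ffunction (F : R -> R) : Prop :=
  [/\ (forall r, 0 <= r -> 0 < F r),
      (forall r s, 0 <= r -> r <= s -> F s <= F r),
      (exists M : R, forall x, (\esum_(y in [set: G]) (F (d x y))%:E <= M%:E)%E) &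
      (exists M : R, forall x y,
          (\esum_(z in [set: G]) (F (d x z) * F (d z y) / F (d x y))%:E <= M%:E)%E)].

Definition fin (Y : {fset G}) : set G := [set x | x \in Y].

(* d(x, L) = inf_{y in L} d(x,y), with inf of the empty set = +oo *)
Definition dist_set (x : G) (L : set G) : \bar R :=
  ereal_inf [set (d x y)%:E | y in L].

Definition diam (Y : {fset G}) : \bar R :=
  ereal_sup [set (d x y)%:E | x in fin Y & y in fin Y].

Definition Xint (X : {fset G}) (m : R) : set G :=
  [set x | (m%:E < dist_set x (~` fin X))%E].
Definition Xnbhd (X : {fset G}) (m : R) : set G :=
  [set x | (dist_set x (fin X) <= m%:E)%E].
End Metric.

Section QMBS.
Variables (G : countType) (A : algType C) (star : A -> A) (nrm : A -> R)
  (AX : {fset G} -> set A) (Phi : {fset G} -> A).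

Definition Agen (L : set G) : set A :=
  [set a | forall B, is_Cstar_sub star nrm B ->
     (forall X : {fset G}, fin X `<=` L -> AX X `<=` B) -> B a].

Definition is_QMBS : Prop :=
  [/\ is_CstarAlg star nrm,
      (forall X, is_Cstar_sub star nrm (AX X) /\ is_simple nrm (AX X)),
      (forall X Y : {fset G}, (X `<=` Y)%fset -> AX X `<=` AX Y),
      (forall a e, 0 < e -> exists X b, AX X b /\ nrm (a - b) < e) &
      (forall X, Phi X = star (Phi X) /\ AX X (Phi X))].

Definition A1 : Prop :=
  forall X b, Agen (~` fin X) b -> Phi X * b = b * Phi X.

Definition bounded_interaction : Prop :=
  exists M : R, forall x : G,
    (\esum_(Y in [set Y : {fset G} | x \in Y]) (nrm (Phi Y) / #|` Y|%:R)%:E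
       <= M%:E)%E.

Definition finite_range (d : G -> G -> R) (r : R) : Prop :=
  forall Y, (r%:E < diam d Y)%E -> Phi Y = 0.

Definition jprime : \bar R :=
  ereal_sup [set \esum_(Y in [set Y : {fset G} | x \in Y]) (nrm (Phi Y))%:E
            | x in [set: G]].
Definition jsecond : \bar R :=
  ereal_sup [set \esum_(Y in [set Y : {fset G} | x \in Y])
                 (#|` Y|%:R * nrm (Phi Y))%:E | x in [set: G]].

Definition Hset (L : set G) : A :=
  \sum_(Y \in [set Y : {fset G} | fin Y `<=` L]) Phi Y.

Definition Hmeet (L : set G) : A :=
  \sum_(Y \in [set Y : {fset G} | fin Y `&` L !=set0]) Phi Y.

Definition boundary (L : set G) : set G :=
  [set x | L x /\ exists Y : {fset G},
       [/\ x \in Y, fin Y `&` ~` L !=set0 & Phi Y <> 0]].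
End QMBS.
End Defs.

(* Both Hamiltonians are finite sums of interaction terms. In their commutator the
   terms common to both sums contribute the commutator of one operator with itself, and
   by (A1) terms with disjoint supports commute. Every remaining pair (Y, Z) overlaps,
   and one of its members contains a point of the region S and also leaves S, so it
   contains a point x of the boundary dS of S. Charging the pair to x and to a point z of
   the overlap, and using |[a, b]| <= 2 |a| |b|, the commutator is bounded by
     sum_(x in dS) sum_(Y ∋ x) 2 |Phi Y| sum_(z in Y) sum_(Z ∋ z) |Phi Z|
       <= 2 j' j'' |dS|. *)

From HB Require Import structures.
From mathcomp Require Import all_boot all_order all_algebra.
From mathcomp Require Import finmap.
From mathcomp Require Import all_classical all_reals all_analysis.
From mathcomp Require Import complex.
Import Order.TTheory GRing.Theory Num.Theory.
Local Open Scope classical_set_scope.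
Local Open Scope ring_scope.

Section CstarNorm.
Context {R : realType} {A : algType R[i]} {star : A -> A} {nrm : A -> R}.
Hypothesis CA : is_CstarAlg star nrm.

Lemma nrm0 : nrm 0 = 0.
Proof.
have := nrm_scale CA 0 0; rewrite scale0r normr0 mul0r.
by move/(congr1 (@complex.Re R)).
Qed.

Lemma nrmN a : nrm (- a) = nrm a.
Proof.
have := nrm_scale CA (-1) a; rewrite scaleN1r normrN1 mul1r.
by move/(congr1 (@complex.Re R)).
Qed.

Lemma nrm_sum_le (I : Type) (s : seq I) (P : pred I) (F : I -> A) :
  nrm (\sum_(i <- s | P i) F i) <= \sum_(i <- s | P i) nrm (F i).
Proof.
elim/big_rec2: _ => [|i y a _ le_ay]; first by rewrite nrm0.
by apply: le_trans (nrm_triangle CA _ _) _; rewrite lerD2l.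
Qed.

Lemma nrm_commutator_le a b : nrm (commutator a b) <= 2 * nrm a * nrm b.
Proof.
apply: le_trans (nrm_triangle CA _ _) _.
rewrite nrmN -mulrA mulr2n mulrDl mul1r.
by apply: lerD; last rewrite mulrC; apply: nrm_submul CA _ _.
Qed.

Lemma nrm_commutatorC a b : nrm (commutator a b) = nrm (commutator b a).
Proof. by rewrite -nrmN /commutator opprB. Qed.

End CstarNorm.

Section Commutator.
Context {R : realType} {A : algType R[i]}.

Lemma commutator_sum (I J : Type) (s : seq I) (t : seq J) (P : pred I) (Q : pred J)
    (f : I -> A) (g : J -> A) :
  commutator (\sum_(i <- s | P i) f i) (\sum_(j <- t | Q j) g j) =
  \sum_(i <- s | P i) \sum_(j <- t | Q j) commutator (f i) (g j).
Proof.
rewrite /commutator [X in X - _]mulr_suml [X in _ - X]mulr_sumr -sumrB.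
by apply: eq_bigr => i _; rewrite mulr_sumr mulr_suml -sumrB.
Qed.

(* The pairs with both members in the common part of [s1] and [s2] add up to the
   commutator of a sum with itself. *)
Lemma commutator_sum_uncommon (T : eqType) (F : T -> A) (s1 s2 : seq T) :
  uniq s1 -> uniq s2 ->
  commutator (\sum_(Y <- s1) F Y) (\sum_(Z <- s2) F Z) =
  \sum_(Y <- s1) \sum_(Z <- s2 | (Y \notin s2) || (Z \notin s1)) commutator (F Y) (F Z).
Proof.
move=> uniq_s1 uniq_s2.
have common : \sum_(Y <- s1 | Y \in s2) F Y = \sum_(Z <- s2 | Z \in s1) F Z.
  rewrite -big_filter -[RHS]big_filter; apply/perm_big/uniq_perm; rewrite ?filter_uniq //.
  by move=> x; rewrite !mem_filter andbC.
have : commutator (\sum_(Y <- s1 | Y \in s2) F Y) (\sum_(Z <- s2 | Z \in s1) F Z) = 0.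
  by rewrite common /commutator subrr.
rewrite commutator_sum big_mkcond /= => common0.
rewrite commutator_sum -[RHS]addr0 -[X in _ = _ + X]common0 -big_split /=.
apply: eq_bigr => Y _; rewrite (bigID (fun Z => (Y \notin s2) || (Z \notin s1))) /=.
congr (_ + _); case: (Y \in s2) => /=; last by rewrite big_pred0.
by apply: eq_bigl => Z; rewrite negbK.
Qed.

End Commutator.

Lemma ler_sum_mem {R : numDomainType} {I : eqType} (F : I -> R) {s : seq I} {x : I} :
  x \in s -> (forall i, 0 <= F i) -> F x <= \sum_(i <- s) F i.
Proof. by move=> xs F_ge0; rewrite (big_rem x xs) /= lerDl sumr_ge0. Qed.

Section PairCounting.
Context {R : realType} {G : choiceType} (a : {fset G} -> R).
Hypothesis a_ge0 : forall P, 0 <= a P.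

Lemma sum_overlapping_le (P : {fset G}) (sQ : seq {fset G}) (cond : pred {fset G}) :
  (forall Q, Q \in sQ -> cond Q -> exists2 z, z \in P & z \in Q) ->
  \sum_(Q <- sQ | cond Q) a Q <= \sum_(z <- P) \sum_(Q <- sQ | z \in Q) a Q.
Proof.
move=> meet; under [leRHS]eq_bigr do rewrite big_mkcond.
rewrite exchange_big big_mkcond [leLHS]big_seq [leRHS]big_seq /=.
apply: ler_sum => Q Qs; case: ifP => [cQ|_]; last first.
  by apply: sumr_ge0 => z _; case: ifP.
have [z zP zQ] := meet Q Qs cQ.
have := ler_sum_mem (fun y => if y \in Q then a Q else 0) zP.
by rewrite zQ; apply => y; case: ifP.
Qed.

(* Every pair [(P, Q)] is charged to a point [x] of [D] in [P] and a point [z] of [P] in [Q]. *)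
Lemma sum_pairs_le_sum_points (D : {fset G}) (sP sQ : seq {fset G})
    (cond : {fset G} -> {fset G} -> bool) :
  (forall P Q, P \in sP -> Q \in sQ -> cond P Q ->
     (exists2 x, x \in D & x \in P) /\ (exists2 z, z \in P & z \in Q)) ->
  \sum_(P <- sP) \sum_(Q <- sQ | cond P Q) a P * a Q <=
  \sum_(x <- D) \sum_(P <- sP | x \in P) a P * \sum_(z <- P) \sum_(Q <- sQ | z \in Q) a Q.
Proof.
move=> meet; have weight_ge0 P :
    0 <= a P * \sum_(z <- P) \sum_(Q <- sQ | z \in Q) a Q.
  by apply: mulr_ge0 => //; apply: sumr_ge0 => z _; apply: sumr_ge0.
under [leRHS]eq_bigr do rewrite big_mkcond.
rewrite exchange_big [leLHS]big_seq [leRHS]big_seq /=.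
apply: ler_sum => P Ps; rewrite -mulr_sumr.
have [/hasP [Q Qs cPQ] | /negbTE no_pair] := boolP (has (cond P) sQ); last first.
  rewrite [X in _ * X]big_hasC ?no_pair // mulr0.
  by apply: sumr_ge0 => x _; case: ifP.
have [[x xD xP] _] := meet P Q Ps Qs cPQ.
apply: le_trans (ler_sum_mem (fun y => if y \in P then _ else 0) xD _); last first.
  by move=> y; case: ifP.
rewrite /= xP ler_wpM2l // sum_overlapping_le // => Q' Q's cPQ'.
exact: (meet P Q' Ps Q's cPQ').2.
Qed.

Lemma sum_points_le (D : {fset G}) (sP sQ : seq {fset G}) (j1 j2 : \bar R) :
  (forall z, ((\sum_(Q <- sQ | z \in Q) a Q)%:E <= j1)%E) ->
  (forall x, ((\sum_(P <- sP | x \in P) (#|` P|%:R * a P))%:E <= j2)%E) ->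
  ((\sum_(x <- D) \sum_(P <- sP | x \in P)
      a P * \sum_(z <- P) \sum_(Q <- sQ | z \in Q) a Q)%:E
   <= j1 * j2 * (#|` D|%:R)%:E)%E.
Proof.
move=> le_j1 le_j2.
have sume_cst (I : Type) (s : seq I) (c : \bar R) : (\sum_(i <- s) c = c * (size s)%:R%:E)%E.
  by rewrite big_const_seq count_predT iter_addr_0 mule_natr.
have j1_ge0 (z : G) : (0 <= j1)%E.
  by apply: le_trans _ (le_j1 z); rewrite lee_fin sumr_ge0.
have weight_le (P : {fset G}) :
    ((\sum_(z <- P) \sum_(Q <- sQ | z \in Q) a Q)%:E <= j1 * (#|` P|%:R)%:E)%E.
  by rewrite -sumEFin -sume_cst; apply: lee_sum => z _.
rewrite -sumEFin -sume_cst; apply: lee_sum => x _.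
rewrite -sumEFin.
apply: (@le_trans _ _ (\sum_(P <- sP | x \in P) j1 * (#|` P|%:R * a P)%:E)%E).
  apply: lee_sum => P _; rewrite EFinM [(_ * a P)%:E]EFinM muleA muleC.
  by apply: lee_wpmul2r; rewrite ?lee_fin.
rewrite -ge0_sume_distrr => [|P _]; last by rewrite lee_fin mulr_ge0.
by rewrite sumEFin; exact: lee_wpmul2l (j1_ge0 x) _ _ (le_j2 x).
Qed.

End PairCounting.

Lemma sum_le_sup_esum {R : realType} {G : choiceType} (f : {fset G} -> R)
    (s : seq {fset G}) (z : G) :
  uniq s ->
  ((\sum_(Y <- s | z \in Y) f Y)%:E <=
   ereal_sup [set \esum_(Y in [set Y : {fset G} | x \in Y]) (f Y)%:E | x in [set: G]])%E.
Proof.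
move=> uniq_s; apply: (@le_trans _ _ (\esum_(Y in [set Y : {fset G} | z \in Y]) (f Y)%:E)).
  apply: esum_ge; exists [set` ([seq Y <- s | z \in Y] : seq {fset G})].
    by split; [exact: finite_seq | move=> Y /=; rewrite mem_filter => /andP[]].
  by rewrite -fsbig_seq ?filter_uniq // big_filter sumEFin.
by apply: ereal_sup_ubound; exists z.
Qed.

(* [finite_support] is [[::]] when the support is infinite. *)
Lemma finite_support_finite {I : choiceType} {T : Type} {idx : T} {D : set I} {F : I -> T}
    {i : I} :
  i \in finite_support idx D F -> finite_set (D `&` F @^-1` [set~ idx]).
Proof. by case: finite_supportP => // X _ _ <- _; exact: finite_fset. Qed.

Lemma finite_subfsets {G : countType} {S : set G} :
  finite_set S -> finite_set [set Y : {fset G} | fin Y `<=` S].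
Proof.
move=> finS; apply: sub_finite_set (finite_fset (fpowerset (fset_set S))) => Y YS /=.
by rewrite fpowersetE; apply/fsubsetP => x xY; rewrite in_fset_set // inE; exact: YS.
Qed.

Section Interaction.
Context {R : realType} {G : countType} {A : algType R[i]} (star : A -> A) (nrm : A -> R)
  (AX : {fset G} -> set A) (Phi : {fset G} -> A).
Hypotheses (QMBS : is_QMBS star nrm AX Phi) (HA1 : A1 star nrm AX Phi).

Let CA : is_CstarAlg star nrm := let: And5 CA _ _ _ _ := QMBS in CA.

Lemma commutator_Phi_disjoint (Y Z : {fset G}) :
  (Y `&` Z = fset0)%fset -> commutator (Phi Y) (Phi Z) = 0.
Proof.
case: QMBS => _ _ _ _ Phi_local YZ0; apply/eqP; rewrite subr_eq0; apply/eqP.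
apply: HA1 => B _ AX_B; apply: (AX_B Z); last by case: (Phi_local Z).
move=> x xZ xY; have : x \in (Y `&` Z)%fset by rewrite inE xY.
by rewrite YZ0 inE.
Qed.

Lemma nrm_commutator_sum_le (s1 s2 : seq {fset G}) :
  uniq s1 -> uniq s2 ->
  nrm (commutator (\sum_(Y <- s1) Phi Y) (\sum_(Z <- s2) Phi Z)) <=
  2 * \sum_(Y <- s1) \sum_(Z <- s2 | ((Y \notin s2) || (Z \notin s1)) &&
                                     (Y `&` Z != fset0)%fset) nrm (Phi Y) * nrm (Phi Z).
Proof.
move=> uniq_s1 uniq_s2; rewrite commutator_sum_uncommon // mulr_sumr.
apply: le_trans (nrm_sum_le CA _ _ _ _) _; apply: ler_sum => Y _.
apply: le_trans (nrm_sum_le CA _ _ _ _) _; rewrite mulr_sumr big_mkcondr /=.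
apply: ler_sum => Z _; case: eqP => [YZ0|_] /=.
  by rewrite commutator_Phi_disjoint // (nrm0 CA).
by rewrite mulrA; exact: nrm_commutator_le CA _ _.
Qed.

Lemma nrm_commutator_le_boundary (B : {fset G}) (s1 s2 : seq {fset G}) :
  uniq s1 -> uniq s2 ->
  (forall Y Z, Y \in s1 -> Z \in s2 -> (Y \notin s2) || (Z \notin s1) ->
     (Y `&` Z != fset0)%fset -> exists2 x, x \in B & x \in Y) ->
  ((nrm (commutator (\sum_(Y <- s1) Phi Y) (\sum_(Z <- s2) Phi Z)))%:E <=
   2%:E * jprime nrm Phi * jsecond nrm Phi * (#|` B|%:R)%:E)%E.
Proof.
move=> uniq_s1 uniq_s2 charge.
apply: le_trans (_ : _ <= (2 * _)%:E)%E _.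
  by rewrite lee_fin; exact: nrm_commutator_sum_le.
rewrite EFinM -!muleA lee_wpmul2l // !muleA.
have nrm_Phi_ge0 Y : 0 <= nrm (Phi Y) := nrm_ge0 CA _.
have le_jprime z : ((\sum_(Q <- s2 | z \in Q) nrm (Phi Q))%:E <= jprime nrm Phi)%E.
  exact: sum_le_sup_esum.
have le_jsecond x :
    ((\sum_(P <- s1 | x \in P) (#|` P|%:R * nrm (Phi P)))%:E <= jsecond nrm Phi)%E.
  exact: sum_le_sup_esum.
apply: (le_trans _ (sum_points_le _ nrm_Phi_ge0 B s1 s2 _ _ le_jprime le_jsecond)).
rewrite lee_fin; apply: sum_pairs_le_sum_points => // Y Z Ys Zs /andP[not_common overlap].
split; first exact: charge Y Z Ys Zs not_common overlap.
by case/fset0Pn: overlap => z; rewrite inE => /andP[zY zZ]; exists z.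
Qed.

Lemma mem_fset_boundary (S : set G) (L Y : {fset G}) (x y : G) :
  S `<=` fin L -> Phi Y <> 0 -> x \in Y -> S x -> y \in Y -> ~ S y ->
  x \in fset_set (boundary Phi S).
Proof.
move=> SL PhiY xY Sx yY nSy; rewrite in_fset_set ?inE.
  by split=> //; exists Y; split=> //; exists y.
by apply: sub_finite_set (finite_fset L) => w [/SL].
Qed.

Lemma nrm_commutator_Hset_Hmeet (S : set G) (L : {fset G}) :
  S `<=` fin L ->
  ((nrm (commutator (Hset Phi (fin L)) (Hmeet Phi S)))%:E <=
   2%:E * jprime nrm Phi * jsecond nrm Phi * (#|` fset_set (boundary Phi S)|%:R)%:E)%E.
Proof.
move=> SL; rewrite (nrm_commutatorC CA) /Hset /Hmeet.
apply: nrm_commutator_le_boundary; try exact: finite_support_uniq.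
move=> Y Z Ys Zs not_common overlap.
have fin_sL : finite_set ([set W : {fset G} | fin W `<=` fin L] `&` Phi @^-1` [set~ 0]).
  by apply: sub_finite_set (finite_subfsets (finite_fset L)) => W [].
have fin_sM := finite_support_finite Ys.
case/fset0Pn: overlap => z; rewrite inE => /andP[zY zZ].
move: Ys Zs; rewrite !in_finite_support // !inE => -[[x [xY Sx]] PhiY] [ZL PhiZ].
(* Were [Y] inside [S], it would be a term of both sums and so would [Z]. *)
have [y yY nSy] : exists2 y, y \in Y & ~ S y.
  apply/existsPNP => YS; case/orP: not_common => /negP; apply.
    by rewrite in_finite_support // inE; split=> // w /YS /SL.
  by rewrite in_finite_support // inE; split=> //; exists z; split=> //; exact: YS.
by exists x; first exact: mem_fset_boundary SL PhiY xY Sx yY nSy.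
Qed.

Lemma nrm_commutator_Hset_Hset (S : set G) (L : {fset G}) :
  S `<=` fin L ->
  ((nrm (commutator (Hset Phi (fin L)) (Hset Phi S)))%:E <=
   2%:E * jprime nrm Phi * jsecond nrm Phi * (#|` fset_set (boundary Phi S)|%:R)%:E)%E.
Proof.
move=> SL; rewrite /Hset.
apply: nrm_commutator_le_boundary; try exact: finite_support_uniq.
move=> Y Z Ys Zs not_common overlap.
have fin_sL : finite_set ([set W : {fset G} | fin W `<=` fin L] `&` Phi @^-1` [set~ 0]).
  by apply: sub_finite_set (finite_subfsets (finite_fset L)) => W [].
have fin_sS : finite_set ([set W : {fset G} | fin W `<=` S] `&` Phi @^-1` [set~ 0]).
  by apply: sub_finite_set fin_sL => W [WS PhiW]; split=> // w /WS /SL.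
case/fset0Pn: overlap => z; rewrite inE => /andP[zY zZ].
move: Ys Zs; rewrite !in_finite_support // !inE => -[YL PhiY] [ZS PhiZ].
have [y yY nSy] : exists2 y, y \in Y & ~ S y.
  apply/existsPNP => YS; case/orP: not_common => /negP; apply.
    by rewrite in_finite_support // inE.
  by rewrite in_finite_support // inE; split=> // w /ZS /SL.
by exists z; first exact: mem_fset_boundary SL PhiY zY (ZS z zZ) yY nSy.
Qed.

End Interaction.

Theorem lemma3p4 (R : realType) (G : countType) (d : G -> G -> R)
  (A : algType R[i]) (star : A -> A) (nrm : A -> R)
  (AX : {fset G} -> set A) (Phi : {fset G} -> A) (r : R) (X : {fset G}) (n : nat) :
  is_metric d -> is_discrete d -> (exists F : R -> R, is_Ffunction d F) ->
  is_QMBS star nrm AX Phi -> A1 star nrm AX Phi ->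
  bounded_interaction nrm Phi -> 0 < r -> finite_range Phi d r ->
  (0 < n)%N ->
  (forall L : {fset G}, Xint d X (n%:R + r) `<=` fin L ->
     ((nrm (commutator (Hset Phi (fin L)) (Hmeet Phi (Xint d X (n%:R + r)))))%:E
       <= 2%:E * jprime nrm Phi * jsecond nrm Phi
          * (#|` fset_set (boundary Phi (Xint d X (n%:R + r)))|%:R)%:E)%E) /\
  (forall L : {fset G}, Xnbhd d X (n%:R + r) `<=` fin L ->
     ((nrm (commutator (Hset Phi (fin L)) (Hset Phi (Xnbhd d X (n%:R + r)))))%:E
       <= 2%:E * jprime nrm Phi * jsecond nrm Phi
          * (#|` fset_set (boundary Phi (Xnbhd d X (n%:R + r)))|%:R)%:E)%E).
Proof.
move=> _ _ _ QMBS HA1 _ _ _ _; split => L.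
  exact: nrm_commutator_Hset_Hmeet QMBS HA1 _ L.
exact: nrm_commutator_Hset_Hset QMBS HA1 _ L.
Qed.
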